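(* Let $H$ be an $r$-graph with $h$ vertices. If $H$ is not $2$-locally large, then $C_r(n,H)\le 2r+1$ for all $n$. If $H$ is $2$-locally large, then $$C_r(n,H)\ge c\left(\frac{\log^{(r)}(n)}{\log^{(r+1)}(n)}\right)^{\frac{1}{(r+1)^2}}$$ for some constant $c=c(r,h)>0$, where $\log^{(s)}(n)$ denotes the $s$-fold iterated logarithm of $n$.
   Context: An $r$-graph is an $r$-uniform hypergraph; $K_n^{(r)}$ is the complete $r$-graph on $n$ vertices. A copy of an $r$-graph $H$ in $K_n^{(r)}$ is a subhypergraph isomorphic to $H$. An $(n,r,H)$-local coloring with $k$ colors is a family of edge-colorings $f_v:E(K_n^{(r)})\to[k]$, one per vertex $v$, such that for every copy $T$ of $H$ there is $u\in V(T)$ with $f_u$ injective on $E(T)$. $C_r(n,H)$ is the minimum such $k$. Let $H$ be an $r$-graph on $m$ vertices and $\sigma:V(H)\to[m]$ a bijection. For $x\in V(H)$ and $1\le i\le r$, $T_x^i$ is the set of edges $e\ni x$ such that $\sigma(x)$ is the $i$-th smallest of the values $\sigma(v)$, $v\in e$. For $r+1\le i\le 2r+1$, $T_x^i$ is the set of edges $e\not\ni x$ such that $\sigma(x)$ is the $(i-r)$-th smallest among the values $\sigma(v)$, $v\in e\cup\{x\}$. $H$ is $2$-locally large if there exists a bijection $\sigma:V(H)\to[m]$ such that for every vertex $x\in V(H)$ some $T_x^i$, $i\in[2r+1]$, contains at least two edges. *)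

From mathcomp Require Import all_boot perm.
From Stdlib Require Import Reals ClassicalEpsilon.

Set Implicit Arguments.
Unset Strict Implicit.
Unset Printing Implicit Defensive.

Definition is_rgraph (r h : nat) (H : {set {set 'I_h}}) : Prop :=
  forall e, e \in H -> #|e| = r.

(* rank of sigma(x) among the sigma-values of e \cup {x}, minus one:
   number of v in e with sigma v < sigma x. *)
Definition below (h : nat) (sigma : {perm 'I_h}) (x : 'I_h) (e : {set 'I_h}) : nat :=
  #|[set v in e | (sigma v < sigma x)%N]|.

Definition Tset (r h : nat) (H : {set {set 'I_h}}) (sigma : {perm 'I_h})
    (x : 'I_h) (i : nat) : {set {set 'I_h}} :=
  [set e in H |
    if (i <= r)%N then (x \in e) && ((below sigma x e).+1 == i)
    else (x \notin e) && ((below sigma x e).+1 + r == i)].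

Definition two_locally_large (r h : nat) (H : {set {set 'I_h}}) : Prop :=
  exists sigma : {perm 'I_h}, forall x : 'I_h,
    exists i : nat, [/\ (1 <= i)%N, (i <= 2 * r + 1)%N & (2 <= #|Tset r H sigma x i|)%N].

Definition copy_edges (h n : nat) (H : {set {set 'I_h}}) (phi : 'I_h -> 'I_n)
  : {set {set 'I_n}} := [set phi @: e | e : {set 'I_h} in H].

(* An (n,r,H)-local colouring with k colours: f v colours the edges of
   K_n^(r) (the r-subsets of 'I_n) with colours in [k] = {0,..,k-1};
   its values on other subsets are irrelevant. *)
Definition local_coloring (r h n k : nat) (H : {set {set 'I_h}}) : Prop :=
  exists f : 'I_n -> {set 'I_n} -> nat,
    (forall v (A : {set 'I_n}), #|A| = r -> (f v A < k)%N) /\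
    forall phi : 'I_h -> 'I_n, injective phi ->
      exists u, u \in [set phi x | x : 'I_h] /\
        forall A B, A \in copy_edges H phi -> B \in copy_edges H phi ->
          f u A = f u B -> A = B.

(* Boolean version (classically decided), needed for ex_minn.  The
   disjunct (h == 0) only serves to make the minimum well defined in the
   degenerate case of a vertexless H, which the theorem excludes. *)
Definition lc_pred (r h n : nat) (H : {set {set 'I_h}}) : pred nat :=
  fun k => (if excluded_middle_informative (local_coloring r n k H) then true else false)
           || (h == 0%N).

Lemma lc_exists (r h n : nat) (H : {set {set 'I_h}}) : exists k, lc_pred r n H k.
Proof.
exists #|{set 'I_n}|; rewrite /lc_pred.
case: h H => [|h] H; first by rewrite orbT.
case: excluded_middle_informative => // nP; exfalso; apply: nP.
exists (fun _ A => nat_of_ord (enum_rank A)); split; first by move=> *; exact: ltn_ord.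
move=> phi _; exists (phi ord0); split; first by apply/imsetP; exists ord0.
by move=> A B _ _ /val_inj /enum_rank_inj.
Qed.

Definition C_r (r h n : nat) (H : {set {set 'I_h}}) : nat := ex_minn (lc_exists r n H).

Definition iter_log (s n : nat) : R := iter s ln (INR n).

Definition lower_bound (r n : nat) : R :=
  Rpower (iter_log r n / iter_log r.+1 n) (1 / INR (r.+1 * r.+1)).

From mathcomp Require Import all_boot perm zify.
From Stdlib Require Import Reals Lra Classical ClassicalEpsilon.
(* Reals rebinds [_ ^ _] in nat_scope to Nat.pow; restore ssrnat's notations. *)
From mathcomp Require Import ssrnat.

(* Upper bound: let f_v colour an edge A by the rank of v in A, shifted by r
   when v is not in A.  The colour of A then names the class T_v^i containing
   A, so f_x is injective on a copy of H at any vertex x all of whose classes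
   T_x^i have at most one edge, and such an x exists unless H is 2-locally
   large.
   Lower bound: given a local colouring with k colours, code each (r+1)-set
   S = {s_0 < ... < s_r} by the 2r+1 colours that s_j gives to S minus s_r
   and to S minus s_j.  A set W of size h+1 on which this code is constant
   (Ramsey) gives a contradiction: embed H in W below its top element w along
   an order sigma witnessing 2-local largeness, and let x be the vertex of
   the copy at which the colouring is injective.  Two edges of one class
   T_x^i, completed to (r+1)-sets by w (i <= r) or by x (i > r), get equal
   codes, hence equal colours at x.  So n is below the Ramsey number for
   (r+1)-sets with k^(2r+1) colours, which the Erdos-Rado stepping-up
   argument bounds by a tower of height r over C k^((r+1)^2); taking r
   iterated logarithms gives the bound. *)

Set Implicit Arguments.
Unset Strict Implicit.
Unset Printing Implicit Defensive.

Lemma leq_expn2r m n e : m <= n -> m ^ e <= n ^ e.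
Proof. by move=> le_mn; case: e => // e; rewrite leq_exp2r. Qed.

Lemma leq_bin_exp m s : 'C(m, s) <= m ^ s.
Proof.
apply: (@leq_trans ('C(m, s) * s`!)); first by rewrite leq_pmulr ?fact_gt0.
rewrite bin_ffact ffact_prod (_ : m ^ s = \prod_(i < s) m).
  by apply: leq_prod => i _; apply: leq_subr.
by rewrite prod_nat_const card_ord.
Qed.

Lemma pigeonhole_subset (T C : finType) (g : T -> C) (Z : {set T}) :
  exists2 Z' : {set T}, Z' \subset Z &
    {in Z' &, forall a b, g a = g b} /\ #|Z| <= #|C| * #|Z'|.
Proof.
have [->|[z zZ]] := set_0Vmem Z.
  by exists set0 => //; split=> [a b|]; rewrite ?inE // cards0.
pose fiber col := [set x in Z | g x == col].
pose big_col := [arg max_(col > g z) #|fiber col|].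
exists (fiber big_col); first by apply/subsetP=> x; rewrite inE => /andP[].
split=> [a b|]; first by rewrite !inE => /andP[_ /eqP->] /andP[_ /eqP->].
have -> : #|Z| = \sum_(col : C) #|fiber col|.
  rewrite -sum1_card (partition_big g predT) //=.
  by apply: eq_bigr => col _; rewrite -sum1_card; apply: eq_bigl => x; rewrite inE.
rewrite -sum_nat_const; apply: leq_sum => col _.
by rewrite /big_col; case: arg_maxnP => //= i _; apply.
Qed.

Lemma pigeonhole_subset_seq (T C : finType) (K : eqType) (G : K -> T -> C)
    (gs : seq K) (Z : {set T}) :
  exists2 Z' : {set T}, Z' \subset Z &
    (forall g, g \in gs -> {in Z' &, forall a b, G g a = G g b}) /\
    #|Z| <= #|C| ^ size gs * #|Z'|.
Proof.
elim: gs Z => [|g gs IH] Z; first by exists Z => //; rewrite mul1n.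
have [Z1 sZ1Z [hom1 le1]] := pigeonhole_subset (G g) Z.
have [Z2 sZ21 [hom2 le2]] := IH Z1.
exists Z2; first exact: subset_trans sZ21 sZ1Z.
split=> [g'|].
  rewrite in_cons => /orP[/eqP-> a b aZ2 bZ2|/hom2 //].
  by apply: hom1; apply: (subsetP sZ21).
by rewrite expnS -mulnA (leq_trans le1) // leq_mul2l le2 orbT.
Qed.

Definition all_lt n (T : {set 'I_n}) (y : 'I_n) := forall t, t \in T -> t < y.

Lemma exists_set_max n (S : {set 'I_n}) : 0 < #|S| ->
  exists2 m, m \in S & all_lt (S :\ m) m.
Proof.
case/card_gt0P => x0 x0S; exists [arg max_(i > x0 in S) (i : nat)].
  by case: arg_maxnP.
case: arg_maxnP => // m mS /= m_max t; rewrite in_setD1 => /andP[tm tS].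
rewrite ltn_neqAle m_max // andbT.
by apply: contra tm => /eqP/val_inj->.
Qed.

Section EndHomogeneous.
Variables (n : nat) (C : finType) (c : {set 'I_n} -> C) (s L : nat).

Definition end_homogeneous (P Y : {set 'I_n}) :=
  forall T : {set 'I_n}, T \subset P -> #|T| = s.+1 -> forall y y', y \in Y -> y' \in Y ->
    all_lt T y -> all_lt T y' -> c (y |: T) = c (y' |: T).

Definition greedy_inv (P Z : {set 'I_n}) :=
  (forall z, z \in Z -> all_lt P z) /\ end_homogeneous P (P :|: Z).

Local Notation D := (#|C| ^ (L ^ s)).

Lemma end_homogeneous_sub (P Y Y' : {set 'I_n}) : Y' \subset Y ->
  end_homogeneous P Y -> end_homogeneous P Y'.
Proof. by move=> sY hom T sT cT y y' /(subsetP sY) yY /(subsetP sY) y'Y; apply: hom. Qed.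

Lemma greedy_inv_step (P Z Z' : {set 'I_n}) x :
  greedy_inv P Z -> x \in Z -> (forall z, z \in Z -> x <= z) -> Z' \subset Z :\ x ->
  (forall U : {set 'I_n}, U \subset P -> #|U| = s ->
     {in Z' &, forall a b, c (a |: (x |: U)) = c (b |: (x |: U))}) ->
  greedy_inv (x |: P) Z'.
Proof.
move=> [PltZ homP] xZ x_min sZ' homZ'.
have Z'_Z z : z \in Z' -> z != x /\ z \in Z.
  by move/(subsetP sZ'); rewrite in_setD1 => /andP[].
split=> [z /Z'_Z [zx zZ] p|T sT cT y y' yY y'Y ltTy ltTy'].
  rewrite in_setU1 => /orP[/eqP->|pP]; last exact: PltZ.
  by rewrite ltn_neqAle x_min // andbT; apply: contra zx => /eqP/val_inj->.
have [xT|xT] := boolP (x \in T); last first.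
  have sub : (x |: P) :|: Z' \subset P :|: Z.
    apply/subsetP=> u; rewrite !inE => /orP[/orP[/eqP->|->]|/Z'_Z[_ ->]];
      by rewrite ?xZ ?orbT.
  apply: homP ltTy ltTy'; rewrite ?(subsetP sub) //.
  apply/subsetP=> u uT; move: (subsetP sT u uT); rewrite in_setU1.
  by case/orP=> // /eqP ux; rewrite -ux uT in xT.
have above_x u : u \in (x |: P) :|: Z' -> all_lt T u -> u \in Z'.
  move=> + /(_ _ xT) xu; rewrite !inE => /orP[/orP[/eqP ux|uP]|] //.
    by rewrite ux ltnn in xu.
  by have := ltn_trans (PltZ _ xZ _ uP) xu; rewrite ltnn.
rewrite -(setD1K xT); apply: homZ'; rewrite ?above_x //.
  apply/subsetP=> u; rewrite in_setD1 => /andP[ux /(subsetP sT)].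
  by rewrite in_setU1 (negbTE ux).
by move: cT; rewrite (cardsD1 x T) xT add1n => -[].
Qed.

(* Move the least element x of Z into P, and shrink Z :\ x so that the colour
   of z |: (x |: U) no longer depends on z, for each of the at most L ^ s
   sets U of size s in P. *)
Lemma greedy_step t (P Z : {set 'I_n}) :
  greedy_inv P Z -> #|P| <= L -> (D + 1) ^ t.+1 <= #|Z| ->
  exists x (Z' : {set 'I_n}),
    [/\ x \in Z, Z' \subset Z :\ x, greedy_inv (x |: P) Z' & (D + 1) ^ t <= #|Z'|].
Proof.
move=> inv leP leZ.
have [z0 z0Z] : exists z, z \in Z.
  by apply/set0Pn; rewrite -card_gt0 (leq_trans _ leZ) // expn_gt0 addn1.
pose x := [arg min_(i < z0 in Z) (i : nat)].
have [xZ x_min] : x \in Z /\ forall z, z \in Z -> x <= z.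
  by rewrite /x; case: arg_minnP => // i iZ imin; split=> // z /imin.
pose Us := enum [set U : {set 'I_n} | U \subset P & #|U| == s].
have [Z' sZ' [homZ' leZ']] :=
  pigeonhole_subset_seq (fun U z => c (z |: (x |: U))) Us (Z :\ x).
exists x, Z'; split=> //.
  apply: (greedy_inv_step inv xZ x_min sZ') => U sU cU; apply: homZ'.
  by rewrite mem_enum inE sU cU eqxx.
have Us_size : size Us <= L ^ s.
  by rewrite -cardE cards_draws (leq_trans (leq_bin2l _ leP)) // leq_bin_exp.
have C_gt0 : 0 < #|C| by apply/card_gt0P; exists (c set0).
have D_gt0 : 0 < D by rewrite expn_gt0 C_gt0.
rewrite -(leq_pmul2l D_gt0); apply: leq_trans (leq_trans _ leZ') _.
  by move: leZ; rewrite (cardsD1 x Z) xZ expnS; lia.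
by rewrite leq_mul2r (leq_pexp2l C_gt0 Us_size) orbT.
Qed.

Lemma greedy_iter t (P Z : {set 'I_n}) :
  greedy_inv P Z -> #|P| + t <= L -> (D + 1) ^ t <= #|Z| ->
  exists P' : {set 'I_n},
    [/\ P' \subset P :|: Z, #|P'| = #|P| + t & end_homogeneous P' P'].
Proof.
elim: t P Z => [|t IH] P Z inv leL leZ.
  exists P; rewrite addn0 subsetUl; split=> //.
  by apply: end_homogeneous_sub inv.2; apply: subsetUl.
have [x [Z' [xZ sZ' inv' leZ']]] := greedy_step inv (leq_trans (leq_addr _ _) leL) leZ.
have cxP : #|x |: P| = #|P|.+1.
  rewrite cardsU1; case: (boolP (x \in P)) => // /(inv.1 x xZ).
  by rewrite ltnn.
have leL' : #|x |: P| + t <= L by rewrite cxP addSnnS.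
have [P' [sP' cP' homP']] := IH _ _ inv' leL' leZ'.
exists P'; split=> //; last by rewrite cP' cxP addSnnS.
apply: subset_trans sP' _; apply/subsetP => u; rewrite !inE.
case/orP=> [/orP[/eqP->|->]|/(subsetP sZ')]; rewrite ?xZ ?orbT //.
by rewrite in_setD1 => /andP[_ ->]; rewrite orbT.
Qed.

Lemma exists_end_homogeneous (A : {set 'I_n}) : (D + 1) ^ L <= #|A| ->
  exists X : {set 'I_n}, [/\ X \subset A, #|X| = L & end_homogeneous X X].
Proof.
move=> leA; have inv0 : greedy_inv set0 A.
  by split=> [z _ t|T]; rewrite ?inE // subset0 => /eqP-> /eqP; rewrite cards0.
have leL : #|@set0 'I_n| + L <= L by rewrite cards0.
have [X [sX cX homX]] := greedy_iter inv0 leL leA.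
by exists X; rewrite -(set0U A) sX cX cards0.
Qed.

End EndHomogeneous.

Definition monochromatic n (C : finType) (c : {set 'I_n} -> C) s (W : {set 'I_n}) :=
  forall S1 S2 : {set 'I_n}, S1 \subset W -> S2 \subset W -> #|S1| = s -> #|S2| = s ->
    c S1 = c S2.

(* Bounds the Ramsey number of (s + 1)-sets for m points and Q colours. *)
Fixpoint ramsey_bound (s m Q : nat) : nat :=
  if s is s'.+1 then let L := (ramsey_bound s' m Q).+1 in (Q ^ (L ^ s') + 1) ^ L
  else Q * m.

Lemma end_homogeneous_drop_max n (C : finType) (c : {set 'I_n} -> C) s
    (X S : {set 'I_n}) mx :
  end_homogeneous c s X X -> mx \in X -> all_lt (X :\ mx) mx ->
  S \subset X :\ mx -> #|S| = s.+2 ->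
  exists T : {set 'I_n}, [/\ T \subset S, #|T| = s.+1 & c S = c (mx |: T)].
Proof.
move=> homX mxX mx_max sS cS.
have S_gt0 : 0 < #|S| by rewrite cS.
have [ms msS ms_max] := exists_set_max S_gt0.
have cT : #|S :\ ms| = s.+1 by move: cS; rewrite (cardsD1 ms S) msS add1n => -[].
have sSX : S \subset X := subset_trans sS (subsetDl _ _).
exists (S :\ ms); split=> //; first exact: subsetDl.
rewrite -{1}(setD1K msS); apply: homX => //.
- exact: subset_trans (subsetDl _ _) sSX.
- exact: (subsetP sSX).
- by move=> t /setD1P[_ /(subsetP sS)]; apply: mx_max.
Qed.

Lemma ramsey n (C : finType) s (c : {set 'I_n} -> C) m (A : {set 'I_n}) :
  ramsey_bound s m #|C| <= #|A| ->
  exists W : {set 'I_n}, [/\ W \subset A, m <= #|W| & monochromatic c s.+1 W].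
Proof.
elim: s c m A => [|s IH] c m A /= leA.
  have [W sWA [homW leW]] := pigeonhole_subset (fun z => c [set z]) A.
  have C_gt0 : 0 < #|C| by apply/card_gt0P; exists (c set0).
  exists W; split=> //; first by rewrite -(leq_pmul2l C_gt0) (leq_trans leA).
  move=> S1 S2 + + /eqP/cards1P[a S1a] /eqP/cards1P[b S2b].
  by rewrite S1a S2b !sub1set; apply: homW.
set L := (ramsey_bound s m #|C|).+1 in leA.
have [X [sXA cX homX]] := exists_end_homogeneous c leA.
have [|mx mxX mx_max] := exists_set_max (S := X); first by rewrite cX.
have leX : ramsey_bound s m #|C| <= #|X :\ mx|.
  by move: cX; rewrite (cardsD1 mx X) mxX add1n => -[->].
have [W [sW leW homW]] := IH (fun T => c (mx |: T)) m _ leX.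
exists W; split=> //; first by apply: subset_trans sW (subset_trans (subsetDl _ _) sXA).
move=> S1 S2 sS1 sS2 cS1 cS2.
have drop_max := end_homogeneous_drop_max homX mxX mx_max.
have [T1 [sT1 cT1 ->]] := drop_max _ (subset_trans sS1 sW) cS1.
have [T2 [sT2 cT2 ->]] := drop_max _ (subset_trans sS2 sW) cS2.
by apply: homW; rewrite ?(subset_trans sT1) ?(subset_trans sT2).
Qed.

Fixpoint tower (b j y : nat) : nat := if j is j'.+1 then b ^ tower b j' y else y.

Lemma tower_mono b j y y' : 0 < b -> y <= y' -> tower b j y <= tower b j y'.
Proof. by move=> b_gt0 le; elim: j => //= j IH; rewrite leq_pexp2l. Qed.

Lemma tower_addn j y d : tower 2 j y + d <= tower 2 j (y + d).
Proof.
elim: j => //= j IH; rewrite (leq_trans _ (leq_pexp2l _ IH)) // expnD.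
by have := ltn_expl d (ltnSn 1); have := expn_gt0 2 (tower 2 j y); nia.
Qed.

Lemma tower_linear j a b y : 0 < a -> 0 < y ->
  a * tower 2 j y + b <= tower 2 j (a * y + b).
Proof.
case: j => [|j] a_gt0 y_gt0 //=.
have -> : a * y + b = y + ((a - 1) * y + b) by nia.
rewrite (leq_trans _ (leq_pexp2l _ (tower_addn j y _))) // expnD.
set d := (a - 1) * y + b; have le_d : a - 1 + b <= d by rewrite /d; nia.
have := ltn_expl d (ltnSn 1); have := expn_gt0 2 (tower 2 j y); nia.
Qed.

Lemma tower_expn j y : 0 < y -> tower 2 j y ^ j.+1 <= tower 2 j (j.+1 * y).
Proof.
case: j => [|j] y_gt0 /=; first by rewrite expn1 mul1n.
rewrite -expnM mulnC leq_pexp2l // -[X in _ <= tower _ _ X]addn0.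
by rewrite -[X in X <= _]addn0 tower_linear.
Qed.

Section RamseyBoundTower.
Variables (m Q q : nat).
Hypotheses (Q_gt0 : 0 < Q) (leQ : Q <= 2 ^ q).

Lemma ramsey_bound_step L s : 0 < L ->
  ((Q ^ (L ^ s) + 1) ^ L).+1 <= 2 ^ ((q + 1) * L ^ s.+1 + 1).
Proof.
move=> L_gt0.
have le1 : Q ^ (L ^ s) + 1 <= 2 ^ (q * L ^ s + 1).
  rewrite expnD expn1 expnM; have := leq_expn2r (L ^ s) leQ.
  by have := expn_gt0 Q (L ^ s); rewrite Q_gt0 /=; nia.
have le2 : (Q ^ (L ^ s) + 1) ^ L <= 2 ^ ((q * L ^ s + 1) * L).
  by rewrite expnM; apply: leq_expn2r.
apply: leq_trans (_ : 2 ^ ((q * L ^ s + 1) * L + 1) <= _).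
  by rewrite expnD expn1; have := expn_gt0 2 ((q * L ^ s + 1) * L); nia.
rewrite leq_exp2l // leq_add2r expnSr.
by have := expn_gt0 L s; rewrite L_gt0 /=; nia.
Qed.

Lemma ramsey_bound_tower s :
  (ramsey_bound s m Q).+1 <= tower 2 s ((Q * m + 1) * (q + 1) ^ s * s.+1`!).
Proof.
elim: s => [|s IH]; first by rewrite /= expn0 !muln1 addn1.
set L := (ramsey_bound s m Q).+1 in IH *; set Y := _ * s.+1`! in IH.
have Y_gt0 : 0 < Y by rewrite /Y !muln_gt0 expn_gt0 !addn1 fact_gt0.
have sY_gt0 : 0 < s.+1 * Y by rewrite muln_gt0 Y_gt0.
apply: leq_trans (ramsey_bound_step s (ltn0Sn _)) _.
rewrite [tower _ _.+1 _]/= leq_exp2l //.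
apply: leq_trans (_ : (q + 1) * tower 2 s (s.+1 * Y) + 1 <= _).
  by rewrite leq_add2r leq_mul2l (leq_trans (leq_expn2r _ IH)) ?tower_expn ?orbT.
have q_gt0 : 0 < q + 1 by rewrite addn1.
apply: leq_trans (tower_linear s 1 q_gt0 sY_gt0) (tower_mono _ _ _) => //.
have -> : (Q * m + 1) * (q + 1) ^ s.+1 * s.+2`! = (q + 1) * (s.+2 * Y).
  by rewrite /Y factS expnS; nia.
nia.
Qed.

End RamseyBoundTower.

Lemma ramsey_bound_poly r m k : 0 < m -> 0 < k ->
  (ramsey_bound r m (k ^ (2 * r + 1))).+1 <=
    tower 2 r (2 * m * (2 * r + 2) ^ r * r.+1`! * k ^ (r.+1 * r.+1)).
Proof.
move=> m_gt0 k_gt0; set K := k ^ (2 * r + 1).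
have K_gt0 : 0 < K by rewrite expn_gt0 k_gt0.
have leK : K <= 2 ^ (k * (2 * r + 1)).
  by rewrite expnM leq_expn2r // ltnW // ltn_expl.
apply: leq_trans (ramsey_bound_tower m K_gt0 leK r) (tower_mono _ _ _) => //.
have le1 : K * m + 1 <= 2 * m * K by nia.
have le2 : (k * (2 * r + 1) + 1) ^ r <= (2 * r + 2) ^ r * k ^ r.
  by rewrite -expnMn leq_expn2r //; nia.
have le3 : K * k ^ r <= k ^ (r.+1 * r.+1) by rewrite -expnD leq_pexp2l //; nia.
apply: leq_trans (_ : 2 * m * K * ((2 * r + 2) ^ r * k ^ r) * r.+1`! <= _).
  by rewrite leq_mul2r leq_mul ?orbT.
rewrite (_ : _ * r.+1`! = 2 * m * (2 * r + 2) ^ r * r.+1`! * (K * k ^ r)); last by nia.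
by rewrite leq_mul2l le3 orbT.
Qed.

Definition rank_in n (S : {set 'I_n}) (v : 'I_n) : nat := #|[set u in S | u < v]|.

Lemma rank_in_lt n (S : {set 'I_n}) (u v : 'I_n) :
  u \in S -> u < v -> rank_in S u < rank_in S v.
Proof.
move=> uS lt_uv; apply: proper_card; apply/properP; split.
  by apply/subsetP => t; rewrite !inE => /andP[-> /ltn_trans]; apply.
by exists u; rewrite !inE ?uS ?lt_uv ?ltnn.
Qed.

Lemma rank_in_ltE n (S : {set 'I_n}) :
  {in S &, forall u v, (rank_in S u < rank_in S v) = (u < v)}.
Proof.
move=> u v uS vS; apply/idP/idP; last exact: rank_in_lt.
case: (ltngtP u v) => // [lt_vu|/val_inj->]; last by rewrite ltnn.
by move/(ltn_trans (rank_in_lt vS lt_vu)); rewrite ltnn.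
Qed.

Lemma rank_in_inj n (S : {set 'I_n}) : {in S &, injective (rank_in S)}.
Proof.
move=> u v uS vS e; case: (ltngtP u v) => [lt|lt|/val_inj //].
  by rewrite -(rank_in_ltE uS vS) e ltnn in lt.
by rewrite -(rank_in_ltE vS uS) e ltnn in lt.
Qed.

Lemma rank_in_lt_card n (S : {set 'I_n}) v : v \in S -> rank_in S v < #|S|.
Proof.
move=> vS; apply: proper_card; apply/properP; split.
  by apply/subsetP => u; rewrite inE => /andP[].
by exists v; rewrite ?inE ?ltnn ?andbF.
Qed.

Lemma rank_in_onto n (S : {set 'I_n}) j :
  j < #|S| -> exists2 v, v \in S & rank_in S v = j.
Proof.
move=> lt_j; pose ranks := [seq rank_in S v | v <- enum S].
have uniq_ranks : uniq ranks.
  by rewrite map_inj_in_uniq ?enum_uniq // => u v; rewrite !mem_enum; apply: rank_in_inj.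
have sub_ranks : {subset ranks <= iota 0 #|S|}.
  move=> i /mapP[v]; rewrite mem_enum => vS ->.
  by rewrite mem_iota rank_in_lt_card.
have le_size : size (iota 0 #|S|) <= size ranks by rewrite size_iota size_map -cardE.
have [_ eq_ranks] := uniq_min_size uniq_ranks sub_ranks le_size.
have : j \in ranks by rewrite eq_ranks mem_iota.
by case/mapP => v; rewrite mem_enum => vS ->; exists v.
Qed.

Lemma rank_in_setU1 n (S : {set 'I_n}) (a v : 'I_n) :
  ~~ (a < v) -> rank_in (a |: S) v = rank_in S v.
Proof.
move=> not_lt; apply: eq_card => u; rewrite !inE.
by case: (u =P a) => [->|] //=; rewrite (negbTE not_lt) andbF.
Qed.

Lemma rank_in_setU1_max n (S : {set 'I_n}) w : all_lt S w -> rank_in (w |: S) w = #|S|.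
Proof.
move=> S_lt; apply: eq_card => u; rewrite !inE.
case: (u =P w) => [->|_] /=.
  by rewrite ltnn; apply/esym/negP => /S_lt; rewrite ltnn.
by case uS: (u \in S) => //=; rewrite S_lt.
Qed.

Lemma rank_in_imset h n (phi : 'I_h -> 'I_n) (sigma : {perm 'I_h}) :
  injective phi -> (forall a b, (phi a < phi b) = (sigma a < sigma b)) ->
  forall (e : {set 'I_h}) x, rank_in (phi @: e) (phi x) = below sigma x e.
Proof.
move=> phi_inj phi_mono e x; rewrite /rank_in /below -(card_imset _ phi_inj).
suff -> : [set u in phi @: e | u < phi x] = phi @: [set v in e | sigma v < sigma x] by [].
apply/setP => u; rewrite inE; apply/andP/imsetP.
  by case=> /imsetP[v ve ->] lt; exists v; rewrite // inE ve -phi_mono.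
by case=> v; rewrite inE => /andP[ve lt] ->; rewrite imset_f // phi_mono.
Qed.

Definition elem_of_rank n (S : {set 'I_n}) (j : nat) : option 'I_n :=
  [pick v in S | rank_in S v == j].

Lemma elem_of_rankE n (S : {set 'I_n}) v j : v \in S -> rank_in S v = j ->
  elem_of_rank S j = Some v.
Proof.
move=> vS <-; rewrite /elem_of_rank; case: pickP => [u /andP[uS /eqP]|/(_ v)].
  by move/(rank_in_inj uS vS)->.
by rewrite vS eqxx.
Qed.

Section OrderPerm.
Variables (h n : nat) (phi : 'I_h -> 'I_n).
Hypothesis phi_inj : injective phi.

Let image := [set phi y | y in [set: 'I_h]].

Lemma rank_image_lt x : rank_in image (phi x) < h.
Proof.
by rewrite -[X in _ < X]card_ord -cardsT -(card_imset _ phi_inj) rank_in_lt_card ?imset_f.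
Qed.

Lemma rank_image_inj : injective (fun x => Ordinal (rank_image_lt x)).
Proof. by move=> a b [/rank_in_inj]; rewrite !imset_f // => /(_ isT isT) /phi_inj. Qed.

Definition order_perm : {perm 'I_h} := perm rank_image_inj.

Lemma order_permE a b : (phi a < phi b) = (order_perm a < order_perm b).
Proof. by rewrite !permE /= rank_in_ltE ?imset_f. Qed.

End OrderPerm.

Lemma exists_order_embedding h n (sigma : {perm 'I_h}) (W : {set 'I_n}) : h <= #|W| ->
  exists phi : 'I_h -> 'I_n,
    [/\ injective phi, forall x, phi x \in W
       & forall a b, (phi a < phi b) = (sigma a < sigma b)].
Proof.
move=> leW.
have [phi phiP] : exists phi : 'I_h -> 'I_n,
    forall x, (phi x \in W) && (rank_in W (phi x) == sigma x).
  apply: (@fin_all_exists _ _ (fun x v => (v \in W) && (rank_in W v == sigma x))) => x.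
  have [v vW rv] := rank_in_onto (leq_trans (ltn_ord (sigma x)) leW).
  by exists v; rewrite vW rv eqxx.
have phiW x : phi x \in W by case/andP: (phiP x).
have rank_phi x : rank_in W (phi x) = sigma x by case/andP: (phiP x) => _ /eqP.
have phi_mono a b : (phi a < phi b) = (sigma a < sigma b).
  by rewrite -(rank_in_ltE (phiW a) (phiW b)) !rank_phi.
exists phi; split=> // a b e; apply: (@perm_inj _ sigma); apply: val_inj.
by rewrite /= -!rank_phi e.
Qed.

Lemma C_r_le r h n k (H : {set {set 'I_h}}) : local_coloring r n k H -> C_r r n H <= k.
Proof.
move=> lc; rewrite /C_r; case: ex_minnP => m _; apply; rewrite /lc_pred.
by case: excluded_middle_informative.
Qed.

Lemma C_r_local_coloring r h n (H : {set {set 'I_h}}) :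
  0 < h -> local_coloring r n (C_r r n H) H.
Proof.
move=> h_gt0; rewrite /C_r; case: ex_minnP => k; rewrite /lc_pred.
by case: excluded_middle_informative => //= _ /eqP h0; rewrite h0 in h_gt0.
Qed.

Lemma local_coloring_gt0 r h n k (H : {set {set 'I_h}}) :
  r < n -> local_coloring r n k H -> 0 < k.
Proof.
move=> lt_rn [f [f_lt _]]; pose v := Ordinal (leq_ltn_trans (leq0n r) lt_rn).
have : 0 < #|[set A : {set 'I_n} | #|A| == r]|.
  by rewrite card_draws card_ord bin_gt0 ltnW.
by case/card_gt0P => A; rewrite inE => /eqP /(f_lt v) /(leq_ltn_trans (leq0n _)).
Qed.

(* The colour f_v(A) = i - 1 says that the edge A lies in T_v^i. *)
Definition rank_coloring r n (v : 'I_n) (A : {set 'I_n}) : nat :=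
  if v \in A then rank_in A v else r + rank_in A v.

Lemma rank_coloring_lt r n (v : 'I_n) (A : {set 'I_n}) :
  #|A| = r -> rank_coloring r v A < 2 * r + 1.
Proof.
move=> cA; rewrite /rank_coloring; case: ifP => [vA|_].
  by have := rank_in_lt_card vA; lia.
have : rank_in A v <= #|A|.
  by apply: subset_leq_card; apply/subsetP=> u; rewrite inE => /andP[].
lia.
Qed.

Lemma rank_coloring_Tset r h n (H : {set {set 'I_h}}) (phi : 'I_h -> 'I_n)
    (sigma : {perm 'I_h}) x e :
  is_rgraph r H -> injective phi -> (forall a b, (phi a < phi b) = (sigma a < sigma b)) ->
  e \in H -> e \in Tset r H sigma x (rank_coloring r (phi x) (phi @: e)).+1.
Proof.
move=> rg phi_inj phi_mono eH.
rewrite inE eH /rank_coloring mem_imset // (rank_in_imset phi_inj phi_mono) /=.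
have [xe|xe] := boolP (x \in e).
  have lt_r : below sigma x e < r.
    rewrite -(rank_in_imset phi_inj phi_mono) -(rg e eH) -(card_imset _ phi_inj).
    by rewrite rank_in_lt_card // mem_imset.
  by rewrite lt_r eqxx.
rewrite ltnNge leq_addr /=; apply/eqP; lia.
Qed.

Lemma local_coloring_rank r h n (H : {set {set 'I_h}}) :
  is_rgraph r H -> ~ two_locally_large r H -> local_coloring r n (2 * r + 1) H.
Proof.
move=> rg not_large; exists (@rank_coloring r n); split=> [v A|phi phi_inj].
  exact: rank_coloring_lt.
pose sigma := order_perm phi_inj.
have phi_mono a b : (phi a < phi b) = (sigma a < sigma b) by apply: order_permE.
have [x small] :
    exists x, forall i, 1 <= i -> i <= 2 * r + 1 -> #|Tset r H sigma x i| <= 1.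
  apply: NNPP => none; apply: not_large; exists sigma => x; apply: NNPP => not_x.
  apply: none; exists x => i i_ge1 i_le; rewrite leqNgt; apply/negP => two.
  by apply: not_x; exists i.
exists (phi x); split=> [|_ _ /imsetP[e1 e1H ->] /imsetP[e2 e2H ->] same].
  exact: imset_f.
have e1T := rank_coloring_Tset x rg phi_inj phi_mono e1H.
have e2T := rank_coloring_Tset x rg phi_inj phi_mono e2H.
rewrite -same in e2T.
have le_i : (rank_coloring r (phi x) (phi @: e1)).+1 <= 2 * r + 1.
  by rewrite rank_coloring_lt // card_imset // rg.
by move/card_le1_eqP: (small _ (ltn0Sn _) le_i) => /(_ e1 e2 e1T e2T) ->.
Qed.

Section LowerBound.
Variables (r h n k : nat) (H : {set {set 'I_h}}) (f : 'I_n -> {set 'I_n} -> nat).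
Hypothesis f_lt : forall v (A : {set 'I_n}), #|A| = r -> f v A < k.+1.

(* Indexed like T_x^i: for S = {s_0 < ... < s_r}, the colour that s_(i-1)
   gives to S minus s_r if i <= r, and that s_(i-r-1) gives to S minus itself
   if i > r. *)
Definition colour_code (S : {set 'I_n}) (i : nat) : nat :=
  if i <= r then
    if (elem_of_rank S i.-1, elem_of_rank S r) is (Some v, Some w)
    then f v (S :\ w) else 0
  else if elem_of_rank S (i - r.+1) is Some v then f v (S :\ v) else 0.

Definition code_ffun (S : {set 'I_n}) : {ffun 'I_(2 * r + 1) -> 'I_k.+1} :=
  [ffun i : 'I_(2 * r + 1) => inord (colour_code S i.+1)].

Lemma colour_code_Tset (sigma : {perm 'I_h}) (phi : 'I_h -> 'I_n) (W : {set 'I_n})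
    w x e i :
  is_rgraph r H -> injective phi -> (forall a b, (phi a < phi b) = (sigma a < sigma b)) ->
  (forall y, phi y \in W) -> all_lt W w -> e \in Tset r H sigma x i ->
  exists S : {set 'I_n},
    [/\ S \subset w |: W, #|S| = r.+1 & colour_code S i = f (phi x) (phi @: e)].
Proof.
move=> rg phi_inj phi_mono phiW W_lt; rewrite inE => /andP[eH].
have sub_e : phi @: e \subset W by apply/subsetP => _ /imsetP[y _ ->].
have ce : #|phi @: e| = r by rewrite card_imset // rg.
rewrite /colour_code; case: ifP => _ /andP[xe /eqP below_i].
  have we : w \notin phi @: e by apply/negP => /(subsetP sub_e) /W_lt; rewrite ltnn.
  exists (w |: phi @: e); split; first by rewrite setUS.
    by rewrite cardsU1 we ce.
  have x_in : phi x \in w |: phi @: e by rewrite !inE mem_imset ?xe ?orbT.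
  have x_rank : rank_in (w |: phi @: e) (phi x) = i.-1.
    rewrite rank_in_setU1; last by rewrite -leqNgt ltnW // W_lt.
    by rewrite (rank_in_imset phi_inj phi_mono) -below_i.
  have w_rank : rank_in (w |: phi @: e) w = r.
    by rewrite rank_in_setU1_max ?ce // => t /(subsetP sub_e) /W_lt.
  by rewrite (elem_of_rankE x_in x_rank) (elem_of_rankE (setU11 _ _) w_rank) setU1K.
have xe' : phi x \notin phi @: e by rewrite mem_imset.
exists (phi x |: phi @: e); split.
- by rewrite subUset sub1set !inE phiW orbT (subset_trans sub_e) ?subsetUr.
- by rewrite cardsU1 xe' ce.
have x_rank : rank_in (phi x |: phi @: e) (phi x) = i - r.+1.
  by rewrite rank_in_setU1 ?ltnn // (rank_in_imset phi_inj phi_mono); lia.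
by rewrite (elem_of_rankE (setU11 _ _) x_rank) setU1K.
Qed.

Lemma local_coloring_lt_ramsey_bound :
  is_rgraph r H -> two_locally_large r H ->
  (forall phi : 'I_h -> 'I_n, injective phi ->
     exists u, u \in [set phi x | x : 'I_h] /\
       forall A B, A \in copy_edges H phi -> B \in copy_edges H phi ->
         f u A = f u B -> A = B) ->
  n < ramsey_bound r h.+1 (k.+1 ^ (2 * r + 1)).
Proof.
move=> rg [sigma large] f_local; rewrite ltnNge; apply/negP => le_n.
have card_code :
    ramsey_bound r h.+1 #|{ffun 'I_(2 * r + 1) -> 'I_k.+1}| <= #|[set: 'I_n]|.
  by rewrite card_ffun !card_ord cardsT card_ord.
have [W [_ leW monoW]] := ramsey code_ffun card_code.
have [|w wW w_max] := exists_set_max (S := W); first exact: leq_trans leW.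
have leW' : h <= #|W :\ w| by move: leW; rewrite (cardsD1 w W) wW add1n ltnS.
have [phi [phi_inj phiW phi_mono]] := exists_order_embedding sigma leW'.
have [_ [/imsetP[x _ ->] f_inj]] := f_local phi phi_inj.
have [i [i_ge1 i_le /card_gt1P[e1 [e2 [e1T e2T e12]]]]] := large x.
have [S1 [sS1 cS1 code1]] := colour_code_Tset rg phi_inj phi_mono phiW w_max e1T.
have [S2 [sS2 cS2 code2]] := colour_code_Tset rg phi_inj phi_mono phiW w_max e2T.
rewrite setD1K // in sS1 sS2.
have lt_i : i.-1 < 2 * r + 1 by lia.
have f_e_lt e : e \in Tset r H sigma x i -> f (phi x) (phi @: e) < k.+1.
  by rewrite inE => /andP[eH _]; rewrite f_lt // card_imset // rg.
have := monoW S1 S2 sS1 sS2 cS1 cS2.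
move/(congr1 (fun F : {ffun _ -> _} => val (F (Ordinal lt_i)))).
rewrite /= !ffunE /= prednK // code1 code2 !inordK ?f_e_lt // => /f_inj.
have copy e : e \in Tset r H sigma x i -> phi @: e \in copy_edges H phi.
  by rewrite inE => /andP[eH _]; apply: imset_f.
move=> /(_ (copy _ e1T) (copy _ e2T)) /(imset_inj phi_inj) e1e2.
by rewrite e1e2 eqxx in e12.
Qed.

End LowerBound.

Open Scope R_scope.

Lemma ln_le x y : 0 < x -> x <= y -> ln x <= ln y.
Proof. by move=> x_gt0 [lt|<-]; [left; apply: ln_increasing | right]. Qed.

Lemma exp_le x y : x <= y -> exp x <= exp y.
Proof. by move=> [lt|<-]; [left; apply: exp_increasing | right]. Qed.

(* Stdlib's ln is 0 on nonpositive arguments. *)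
Lemma ln_nonpos x : x <= 0 -> ln x = 0.
Proof. by move=> x_le0; rewrite /ln; case: Rlt_dec => // x_gt0; exfalso; lra. Qed.

Lemma INR_expn (a b : nat) : INR (a ^ b)%N = INR a ^ b.
Proof. by elim: b => [|b IH] //=; rewrite expnS mult_INR IH. Qed.

Lemma iter_ln_le_tower j x y : x <= INR (tower 2 j y) -> iter j ln x <= INR y.
Proof.
elim: j x => [|j IH] x le_x //; rewrite iterSr; apply: IH.
have [x_le0|x_gt0] := Rle_or_lt x 0; first by rewrite ln_nonpos //; apply: pos_INR.
apply: Rle_trans (ln_le x_gt0 le_x) _.
have two : INR 2 = 2 by rewrite /=; lra.
rewrite [tower _ _.+1 _]/= INR_expn two ln_pow; last lra.
have ln2_le1 : ln 2 <= 1.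
  rewrite -[X in _ <= X]ln_exp; apply: ln_le; first lra.
  by have := exp_ineq1_le 1; lra.
by rewrite -[X in _ <= X]Rmult_1_r; apply: Rmult_le_compat_l => //; apply: pos_INR.
Qed.

Lemma iter_ln_ge_tower j x y : INR (tower 3 j y) <= x -> INR y <= iter j ln x.
Proof.
elim: j x => [|j IH] x le_x //; rewrite iterSr; apply: IH.
have three : INR 3 = 3 by rewrite /=; lra.
have three_pow_gt0 : 0 < INR (tower 3 j.+1 y).
  by rewrite [tower _ _.+1 _]/= INR_expn three; apply: pow_lt; lra.
apply: Rle_trans _ (ln_le three_pow_gt0 le_x).
rewrite [tower _ _.+1 _]/= INR_expn three ln_pow; last lra.
have ln3_ge1 : 1 <= ln 3.
  rewrite -[X in X <= _]ln_exp; apply: ln_le; [exact: exp_pos | exact: exp_le_3].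
by rewrite -[X in X <= _]Rmult_1_r; apply: Rmult_le_compat_l => //; apply: pos_INR.
Qed.

Lemma lower_bound_le r n (C k : nat) : (0 < C)%N -> (0 < k)%N -> 1 <= iter_log r.+1 n ->
  iter_log r n <= INR (C * k ^ (r.+1 * r.+1)) ->
  Rpower (INR C) (- (1 / INR (r.+1 * r.+1))) * lower_bound r n <= INR k.
Proof.
move=> C_gt0 k_gt0 lnL_ge1 le_L.
rewrite /lower_bound; set q := (r.+1 * r.+1)%N; set e := 1 / INR q.
set L := iter_log r n in le_L *.
have lnL : iter_log r.+1 n = ln L by [].
rewrite lnL in lnL_ge1 *.
have L_gt0 : 0 < L.
  have [L_le0|//] := Rle_or_lt L 0.
  by rewrite ln_nonpos in lnL_ge1; lra.
have q_gt0 : 0 < INR q by apply: lt_0_INR; apply/ltP; rewrite muln_gt0.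
have C_gt0' : 0 < INR C by apply: lt_0_INR; apply/ltP.
have k_gt0' : 0 < INR k by apply: lt_0_INR; apply/ltP.
have e_q : e * INR q = 1 by rewrite /e; field; lra.
have le_ln_ratio : ln (L / ln L) <= ln L.
  have lnL_gt0 : 0 < ln L by lra.
  rewrite ln_mult ?ln_Rinv //; last exact: Rinv_0_lt_compat.
  suff : 0 <= ln (ln L) by lra.
  by rewrite -ln_1; apply: ln_le; lra.
have le_lnL : ln L <= ln (INR C) + INR q * ln (INR k).
  rewrite -ln_pow // -ln_mult //; last exact: pow_lt.
  by apply: ln_le; rewrite // -INR_expn -mult_INR.
rewrite /Rpower -exp_plus -[X in _ <= X](exp_ln _ k_gt0'); apply: exp_le.
have e_gt0 : 0 < e by rewrite /e; apply: Rdiv_lt_0_compat; lra.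
have := Rmult_le_compat_l e _ _ (Rlt_le _ _ e_gt0) (Rle_trans _ _ _ le_ln_ratio le_lnL).
by rewrite Rmult_plus_distr_l -Rmult_assoc e_q; lra.
Qed.

Close Scope R_scope.

Theorem theorem8 : forall r h : nat, (0 < h)%N ->
  (forall H : {set {set 'I_h}}, is_rgraph r H -> ~ two_locally_large r H ->
     forall n : nat, (C_r r n H <= 2 * r + 1)%N) /\
  (exists c : R, (0 < c)%R /\ exists N : nat,
     forall H : {set {set 'I_h}}, is_rgraph r H -> two_locally_large r H ->
     forall n : nat, (N <= n)%N -> (c * lower_bound r n <= INR (C_r r n H))%R).
Proof.
move=> r h h_gt0; split=> [H rg not_large n|].
  exact/C_r_le/local_coloring_rank.
pose C := (2 * h.+1 * (2 * r + 2) ^ r * r.+1`!)%N.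
exists (Rpower (INR C) (- (1 / INR (r.+1 * r.+1)))); split; first exact: exp_pos.
exists (maxn r.+1 (tower 3 r.+1 1)) => H rg large n; rewrite geq_max => /andP[lt_rn le_n].
have lc := C_r_local_coloring r n H h_gt0.
have := local_coloring_gt0 lt_rn lc.
case: (C_r r n H) lc => [//|k] [f [f_lt f_local]] _.
have lt_n := local_coloring_lt_ramsey_bound f_lt rg large f_local.
have le_tower := ramsey_bound_poly r (ltn0Sn h) (ltn0Sn k).
have C_gt0 : (0 < C)%N by rewrite !muln_gt0 expn_gt0 fact_gt0 addn2.
apply: lower_bound_le => //.
  exact: (iter_ln_ge_tower (y := 1) (le_INR _ _ (elimT leP le_n))).
apply: iter_ln_le_tower; apply: le_INR; apply/leP.
exact: leq_trans (ltnW lt_n) (leq_trans (leqnSn _) le_tower).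
Qed.
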